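(* Let $\mathcal{O}$ be a field, $2\le m\le n$, $t = m-1$, $P = \mathcal{O}[X_{m\times n}]$, $I = \mathrm{I}_m(X)$, $J = (f_1,\ldots,f_{n-t})$ with $f_i = \det X_{[i,i+t]}$, and $\mathfrak{Q}_i = \mathrm{I}_t(X_{[i,i+t-1]})$. Then, as ideals of $P$, $$\mathfrak{Q}_2\mathfrak{Q}_3\cdots\mathfrak{Q}_{n-t} \subseteq (J :_P I),$$ i.e. $\mathfrak{Q}_2\cdots\mathfrak{Q}_{n-t}\, I \subseteq J$.
   Context: $P$ is the polynomial ring over $\mathcal{O}$ in the entries of an $m\times n$ matrix of indeterminates $X$; $\mathrm{I}_k(Y)$ is the ideal of $k\times k$ minors of $Y$; $X_{[a,b]}$ is the submatrix of $X$ consisting of columns $a$ through $b$ inclusive. An empty product of ideals is $P$. *)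

From HB Require Import structures.
From mathcomp Require Import all_boot all_order all_algebra.
From mathcomp Require Import mpoly.
Set Implicit Arguments. Unset Strict Implicit. Unset Printing Implicit Defensive.
Import GRing.Theory.
Local Open Scope ring_scope.

Definition ideal_gen (R : comNzRingType) (S : R -> Prop) : R -> Prop :=
  fun p => exists (k : nat) (g c : 'I_k -> R),
    (forall i, S (g i)) /\ p = \sum_(i < k) c i * g i.

Definition idealM (R : comNzRingType) (A B : R -> Prop) : R -> Prop :=
  ideal_gen (fun x => exists a b, [/\ A a, B b & x = a * b]).

Definition idealT (R : comNzRingType) : R -> Prop := fun _ => True.

Definition ideal_prod (R : comNzRingType) (s : seq (R -> Prop)) : R -> Prop :=
  foldr (@idealM R) (@idealT R) s.

Definition ideal_colon (R : comNzRingType) (J I : R -> Prop) : R -> Prop :=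
  fun p => forall x, I x -> J (p * x).

Definition minors (R : comNzRingType) (p q k : nat) (Y : 'M[R]_(p, q)) : R -> Prop :=
  fun d => exists (f : 'I_k -> 'I_p) (g : 'I_k -> 'I_q),
    [/\ forall a b : 'I_k, (a < b)%N -> (f a < f b)%N,
        forall a b : 'I_k, (a < b)%N -> (g a < g b)%N
      & d = \det (mxsub f g Y)].

Definition minor_ideal (R : comNzRingType) (p q k : nat) (Y : 'M[R]_(p, q)) : R -> Prop :=
  ideal_gen (minors k Y).

Definition indetmx (F : fieldType) (m n : nat) : 'M[{mpoly F[m * n]}]_(m, n) :=
  \matrix_(i < m, j < n) 'X_(mxvec_index i j).

(* Column c (0-indexed, as a nat) of X, or zero if out of range. *)
Definition colnat (R : comNzRingType) (m n : nat) (X : 'M[R]_(m, n)) (c : nat) : 'cV[R]_m :=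
  if @insub _ (fun x => (x < n)%N) 'I_n c is Some c' then col c' X else 0.

(* colblock X a k = X_{[a, a+k-1]}: the submatrix of the k consecutive columns
   a, a+1, ..., a+k-1 of X, columns being numbered from 1. *)
Definition colblock (R : comNzRingType) (m n : nat) (X : 'M[R]_(m, n)) (a k : nat) : 'M[R]_(m, k) :=
  \matrix_(i < m, j < k) colnat X (a.-1 + j) i ord0.

From HB Require Import structures.
From mathcomp Require Import all_boot all_order all_algebra.
From mathcomp Require Import mpoly.
From mathcomp Require Import zify.
From mathcomp Require perm.
Set Implicit Arguments. Unset Strict Implicit. Unset Printing Implicit Defensive.
Import GRing.Theory.
Local Open Scope ring_scope.

(* Write W_i = X_[i, i+t-1] and G_i for the ideal generated by J and the
   maximal minors det [W_i | x_c] with c < i.  By Cramer's rule, a t-minor q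
   of W_i times any maximal minor det C is a combination of the minors
   det [W_i | x_v], v a column of C; such a minor vanishes if x_v lies in W_i,
   is f_i if v = i + t, and is a generator of G_i if v < i.  Hence
   Q_i G_(i+1) and Q_(n-t) I lie in G_i, so descending induction gives
   Q_2 ... Q_(n-t) I in G_2.  The only extra generator of G_2 is
   det [W_2 | x_1] = +-f_1.  When m = n, I is generated by f_1 alone. *)

Section IdealGen.
Variable R : comNzRingType.
Implicit Types S T U : R -> Prop.

Lemma ideal_gen_sub S p : S p -> ideal_gen S p.
Proof.
by move=> Sp; exists 1%N, (fun _ => p), (fun _ => 1); rewrite big_ord1 mul1r.
Qed.

Lemma ideal_gen0 S : ideal_gen S 0.
Proof. by exists 0%N, (fun _ => 0), (fun _ => 0); rewrite big_ord0; split=> [[]|]. Qed.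

Lemma ideal_genD S p q : ideal_gen S p -> ideal_gen S q -> ideal_gen S (p + q).
Proof.
move=> [k1 [g1 [c1 [Sg1 ->]]]] [k2 [g2 [c2 [Sg2 ->]]]].
pose pick (A : Type) (h1 : 'I_k1 -> A) (h2 : 'I_k2 -> A) i := match split i with inl a => h1 a | inr b => h2 b end.
exists (k1 + k2)%N, (pick _ g1 g2), (pick _ c1 c2); split=> [i|].
  by rewrite /pick; case: split.
rewrite big_split_ord; congr (_ + _); apply: eq_bigr => i _.
  by rewrite /pick (unsplitK (inl i)).
by rewrite /pick (unsplitK (inr i)).
Qed.

Lemma ideal_genMl S r p : ideal_gen S p -> ideal_gen S (r * p).
Proof.
move=> [k [g [c [Sg ->]]]]; exists k, g, (fun i => r * c i); split=> //.
by rewrite big_distrr /=; apply: eq_bigr => i _; rewrite mulrA.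
Qed.

Lemma ideal_gen_sum S k (F : 'I_k -> R) :
  (forall i, ideal_gen S (F i)) -> ideal_gen S (\sum_(i < k) F i).
Proof.
elim: k F => [|k IHk] F SF; first by rewrite big_ord0; apply: ideal_gen0.
by rewrite big_ord_recr; apply: ideal_genD => //; apply: IHk.
Qed.

Lemma ideal_gen_mulr S U p x :
  ideal_gen S p -> (forall s, S s -> ideal_gen U (s * x)) -> ideal_gen U (p * x).
Proof.
move=> [k [g [c [Sg ->]]]] SU; rewrite big_distrl /=; apply: ideal_gen_sum => i.
by rewrite -mulrA; apply/ideal_genMl/SU.
Qed.

Lemma ideal_gen_mul S T U a b :
  (forall s u, S s -> T u -> ideal_gen U (s * u)) ->
  ideal_gen S a -> ideal_gen T b -> ideal_gen U (a * b).
Proof.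
move=> STU Sa Tb; apply: ideal_gen_mulr Sa _ => s Ss; rewrite mulrC.
by apply: ideal_gen_mulr Tb _ => u Tu; rewrite mulrC; apply: STU.
Qed.

Lemma ideal_gen_subset S U a :
  (forall s, S s -> ideal_gen U s) -> ideal_gen S a -> ideal_gen U a.
Proof.
move=> SU Sa; rewrite -[a]mulr1.
by apply: ideal_gen_mulr Sa _ => s Ss; rewrite mulr1; apply: SU.
Qed.

End IdealGen.

Section StrictlyIncreasing.
Variables k N : nat.

Definition strictly_increasing (f : 'I_k -> 'I_N) :=
  forall a b : 'I_k, (a < b)%N -> (f a < f b)%N.

Variable f : 'I_k -> 'I_N.
Hypothesis f_incr : strictly_increasing f.

Lemma leq_incr (a : 'I_k) : (a <= f a)%N.
Proof.
suff le_val i (b : 'I_k) : b = i :> nat -> (i <= f b)%N by apply: le_val.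
elim: i b => [//|i IHi] b eb.
have lt_ik : (i < k)%N by have := ltn_ord b; lia.
have := IHi (Ordinal lt_ik) erefl; have := f_incr (a := Ordinal lt_ik) (b := b).
by rewrite /= eb => /(_ (ltnSn i)); lia.
Qed.

Lemma incr_room (a : 'I_k) : (f a + (k - a.+1) < N)%N.
Proof.
suff room d (b : 'I_k) : (b + d < k)%N -> (f b + d < N)%N.
  by apply: room; have := ltn_ord a; lia.
elim: d b => [|d IHd] b lt_bk; first by rewrite addn0.
have lt_b1k : (b.+1 < k)%N by lia.
have /= := f_incr (a := b) (b := Ordinal lt_b1k) (ltnSn b).
by have /= := IHd (Ordinal lt_b1k); lia.
Qed.

Lemma incr_val (a : 'I_k) : (N <= k)%N -> f a = a :> nat.
Proof. by have := leq_incr a; have := incr_room a; have := ltn_ord a; lia. Qed.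

End StrictlyIncreasing.

Lemma incr_lift k (f : 'I_k -> 'I_k.+1) :
  strictly_increasing f -> exists r : 'I_k.+1, forall a, f a = lift r a.
Proof.
move=> f_incr.
have [r r_out] : exists r, r \notin codom f.
  apply/existsP; rewrite -negb_forall; apply/negP => /forallP cover.
  have : (#|'I_k.+1| <= #|codom f|)%N by apply/subset_leq_card/subsetP => y _.
  by move/leq_trans/(_ (card_size _)); rewrite size_codom !card_ord ltnn.
have r_neq a : r != f a by apply: contra r_out => /eqP ->; apply: codom_f.
pose s a := sval (unlift_some (r_neq a)).
have fE a : f a = lift r (s a) by rewrite /s; case: unlift_some.
have s_incr : strictly_increasing s.
  move=> a b /f_incr; rewrite !fE /= /bump.
  by case: (leqP r (s a)); case: (leqP r (s b)) => /=; lia.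
by exists r => a; rewrite fE; congr lift; apply: val_inj; apply: incr_val.
Qed.

Lemma cofactor_mul_det (R : comNzRingType) k (M C : 'M[R]_k.+1) j0 r :
  cofactor M r j0 * \det C =
  \sum_j \det (\matrix_(i, l) if l == j0 then C i j else M i l) * \adj C j r.
Proof.
pose u : 'rV[R]_k.+1 := \row_i cofactor M i j0.
(* Laplace expansion along column [j0] is linear in that column. *)
have expand j : \det (\matrix_(i, l) if l == j0 then C i j else M i l) = (u *m C) 0 j.
  rewrite (expand_det_col _ j0) mxE; apply: eq_bigr => i _.
  rewrite !mxE eqxx mulrC; congr (_ * _); rewrite /cofactor; congr (_ * \det _).
  by apply/matrixP => a b; rewrite !mxE lift_eqF.
have : (u *m C *m \adj C) 0 r = (u *m (\det C)%:M) 0 r by rewrite -mulmxA mul_mx_adj.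
rewrite mul_mx_scalar [in RHS]mxE [in RHS]mxE mulrC => <-.
by rewrite mxE; apply: eq_bigr => j _; rewrite expand.
Qed.

Section Windows.
Variable R : comNzRingType.
Variables t n : nat.
Variable X : 'M[R]_(t.+1, n).

(* Unlike [colblock], columns are numbered from 0 here. *)
Definition colmx (s : 'I_t.+1 -> nat) : 'M[R]_t.+1 :=
  \matrix_(i, j) colnat X (s j) i ord0.

Definition winmx (b v : nat) : 'M[R]_t.+1 :=
  colmx (fun j => if j == ord_max then v else (b + j)%N).

Definition Jgen (p : R) : Prop :=
  exists2 i : nat, (1 <= i <= n - t)%N & p = \det (colblock X i t.+1).

(* [Jgen] generates J, and [Jwin b] the ideal G_(b+1) above. *)
Definition Jwin (b : nat) (p : R) : Prop :=
  Jgen p \/ exists2 c, (c < b)%N & p = \det (winmx b c).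

Lemma colblock_colmx b : colblock X b.+1 t.+1 = colmx (fun j => b + j)%N.
Proof. by apply/matrixP => i j; rewrite !mxE. Qed.

Lemma det_colmx_repeat s (j1 j2 : 'I_t.+1) :
  j1 != j2 -> s j1 = s j2 -> \det (colmx s) = 0.
Proof.
move=> neq_j eq_s; rewrite -det_tr; apply: (determinant_alternate neq_j) => i.
by rewrite !mxE eq_s.
Qed.

Lemma winmx_replace b v s j :
  \matrix_(i, l) (if l == ord_max then colmx s i j else winmx b v i l) = winmx b (s j).
Proof. by apply/matrixP => i l; rewrite !mxE; case: eqP. Qed.

Lemma det_winmx_Jwin b v :
  (b < n - t)%N -> (v <= b + t)%N -> ideal_gen (Jwin b) (\det (winmx b v)).
Proof.
move=> lt_b le_v; have [lt_vb | le_bv] := ltnP v b.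
  by apply: ideal_gen_sub; right; exists v.
have [lt_v | ge_v] := ltnP v (b + t).
  have lt_vbt : (v - b < t.+1)%N by lia.
  have neq_max : ord_max != Ordinal lt_vbt by rewrite -val_eqE /=; lia.
  rewrite (det_colmx_repeat neq_max); first exact: ideal_gen0.
  by rewrite eqxx eq_sym (negbTE neq_max) /=; lia.
have -> : v = (b + t)%N by lia.
apply: ideal_gen_sub; left; exists b.+1; first lia.
rewrite colblock_colmx; congr (\det _).
by apply/matrixP => i j; rewrite !mxE; case: eqP => [->|].
Qed.

Lemma cofactor_winmx b q : minors t (colblock X b.+1 t) q ->
  exists r : 'I_t.+1, forall v, cofactor (winmx b v) r ord_max = (-1) ^+ (r + t) * q.
Proof.
move=> [f [g [f_incr g_incr ->]]]; have [r fE] := incr_lift f_incr.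
exists r => v; rewrite /cofactor; congr (_ * \det _).
apply/matrixP => i j; rewrite !mxE lift_eqF fE lift_max /=.
by rewrite (incr_val g_incr).
Qed.

Lemma minor_mul_det_Jwin b q s :
  (b < n - t)%N -> minors t (colblock X b.+1 t) q ->
  (forall j, s j <= b + t)%N -> ideal_gen (Jwin b) (q * \det (colmx s)).
Proof.
move=> lt_b q_minor le_s; have [r cofE] := cofactor_winmx q_minor.
have -> : q = (-1) ^+ (r + t) * cofactor (winmx b 0) r ord_max.
  by rewrite cofE mulrA -exprD -signr_odd oddD addbb mul1r.
rewrite -mulrA cofactor_mul_det; apply/ideal_genMl/ideal_gen_sum => j.
by rewrite winmx_replace mulrC; apply/ideal_genMl/det_winmx_Jwin.
Qed.

Lemma maximal_minor_colmx x : minors t.+1 X x ->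
  exists2 g : 'I_t.+1 -> 'I_n, strictly_increasing g & x = \det (colmx (fun j => g j)).
Proof.
move=> [f [g [f_incr g_incr ->]]]; exists g => //; congr (\det _).
apply/matrixP => i j; rewrite !mxE /colnat valK.
by rewrite (_ : f i = i) ?mxE //; apply/val_inj/(incr_val f_incr).
Qed.

Lemma Jwin_base b q x : (b.+1 = n - t)%N ->
  minors t (colblock X b.+1 t) q -> minors t.+1 X x -> ideal_gen (Jwin b) (q * x).
Proof.
move=> eq_b q_minor /maximal_minor_colmx [g _ ->].
by apply: minor_mul_det_Jwin => // [|j]; [lia | have := ltn_ord (g j); lia].
Qed.

Lemma Jwin_step b q y : (b.+1 < n - t)%N ->
  minors t (colblock X b.+1 t) q -> ideal_gen (Jwin b.+1) y -> ideal_gen (Jwin b) (q * y).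
Proof.
move=> lt_b q_minor; apply: ideal_gen_mul (ideal_gen_sub q_minor).
move=> q' y' q'_minor [Jy' | [c lt_c ->]].
  by apply/ideal_genMl/ideal_gen_sub; left.
apply: minor_mul_det_Jwin => // [|j]; first lia.
by case: eqP => [_ | /eqP]; [lia | rewrite -val_eqE /=; have := ltn_ord j; lia].
Qed.

Lemma Jwin_prod len b : (b + len.+1 = n - t)%N ->
  forall p, ideal_prod [seq minor_ideal t (colblock X i t) | i <- iota b.+1 len.+1] p ->
  forall x, minor_ideal t.+1 X x -> ideal_gen (Jwin b) (p * x).
Proof.
elim: len b => [|len IHlen] b eq_b p Qp x Ix.
  apply: ideal_gen_mulr Qp _ => _ [q [y [Qq _ ->]]].
  rewrite mulrAC mulrC; apply/ideal_genMl/(ideal_gen_mul _ Qq Ix).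
  by move=> q' x' q'_minor x'_minor; apply: Jwin_base => //; lia.
apply: ideal_gen_mulr Qp _ => _ [q [y [Qq Qy ->]]].
have Jyx : ideal_gen (Jwin b.+1) (y * x) by apply: IHlen Qy x Ix; lia.
rewrite -mulrA; apply: ideal_gen_mul Qq Jyx.
by move=> q' y' q'_minor Jy'; apply: Jwin_step (ideal_gen_sub _) => //; lia.
Qed.

Lemma Jwin1_Jgen p : (1 <= n - t)%N -> ideal_gen (Jwin 1) p -> ideal_gen Jgen p.
Proof.
move=> le1; apply: ideal_gen_subset => s [Js | [c lt_c ->]]; first exact: ideal_gen_sub.
have -> : c = 0%N by lia.
(* [winmx 1 0] is [colblock X 1 t.+1] with its columns rotated by one step. *)
have -> : winmx 1 0 = col_perm (perm.perm (@ordS_inj t.+1)) (colblock X 1 t.+1).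
  apply/matrixP => i j; rewrite colblock_colmx !mxE perm.permE /=.
  case: eqP => [-> | /eqP neq_max] /=; first by rewrite modnn.
  rewrite modn_small // ltnS; have := ltn_ord j.
  by move: neq_max; rewrite -val_eqE /=; lia.
rewrite col_permE det_mulmx det_perm mulrC; apply/ideal_genMl/ideal_gen_sub.
by exists 1%N.
Qed.

Lemma maximal_minor_Jgen x : n = t.+1 -> minor_ideal t.+1 X x -> ideal_gen Jgen x.
Proof.
move=> eq_n; apply: ideal_gen_subset => _ /maximal_minor_colmx [g g_incr ->].
apply: ideal_gen_sub; exists 1%N; first lia.
rewrite colblock_colmx; congr (\det _); apply/matrixP => i j.
by rewrite !mxE (incr_val g_incr) //; lia.
Qed.

End Windows.

Theorem proposition4p3 (F : fieldType) (m n : nat) (hm : (2 <= m)%N) (hmn : (m <= n)%N) :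
  let t := m.-1 in
  let X := @indetmx F m n in
  let I := minor_ideal m X in
  let J := ideal_gen (fun p => exists2 i : nat, (1 <= i <= n - t)%N & p = \det (colblock X i m)) in
  let Q := fun i : nat => minor_ideal t (colblock X i t) in
  forall p, ideal_prod [seq Q i | i <- iota 2 (n - t - 1)] p -> ideal_colon J I p.
Proof.
case: m hm hmn => [|t] // _ le_tn; cbv zeta => /= p Qp x Ix.
have [lt1 | le1] := ltnP 1 (n - t).
  rewrite (_ : n - t - 1 = (n - t - 2).+1)%N in Qp; last lia.
  apply: Jwin1_Jgen; first lia.
  by apply: Jwin_prod Qp x Ix; lia.
by apply/ideal_genMl/maximal_minor_Jgen => //; lia.
Qed.
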